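(* Let $r\ge 1$ and let $x_0,y_0$ be positive integers. Let $p_r(x_0,y_0;x,y)$ denote the probability that the CA competition process with fitness ratio $r$ started at $(x_0,y_0)$ is at state $(x,y)$ at time $x+y-x_0-y_0$. Then for all integers $k\ge0$, $h\ge0$, \[ p_r(x_0,y_0;x_0+k,y_0+h)\ \ge\ \frac{(x_0)_k\,(y_0)_h}{(rx_0+y_0)_{k+h}}\binom{k+h}{k}. \]
   Context: The CA competition process with fitness ratio $r\ge 1$ started at $(x_0,y_0)$ is the discrete-time Markov chain $\{(X_t,Y_t)\}_{t\ge0}$ on $\{(x,y)\in\mathbb{Z}^2: x\ge1,y\ge1\}$ with $(X_0,Y_0)=(x_0,y_0)$ and transition probabilities: from $(x,y)$ it moves to $(x+1,y)$ with probability $\frac{rx}{rx+y}$ and to $(x,y+1)$ with probability $\frac{y}{rx+y}$. $(x)_k=\prod_{i=0}^{k-1}(x+i)$ denotes the Pochhammer symbol (with $(x)_0=1$). *)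

From HB Require Import structures.
From mathcomp Require Import all_boot all_order all_algebra.
Set Implicit Arguments. Unset Strict Implicit. Unset Printing Implicit Defensive.
Import Order.TTheory GRing.Theory Num.Theory.
Local Open Scope ring_scope.

Definition ca_step (s : nat * nat) (b : bool) : nat * nat :=
  if b then (s.1.+1, s.2) else (s.1, s.2.+1).

Definition ca_trans (R : realFieldType) (r : R) (s : nat * nat) (b : bool) : R :=
  let x := (s.1)%:R in let y := (s.2)%:R in
  if b then r * x / (r * x + y) else y / (r * x + y).

Fixpoint ca_path_prob (R : realFieldType) (r : R) (s : nat * nat) (bs : seq bool) : R :=
  match bs with
  | [::] => 1
  | b :: bs' => ca_trans r s b * ca_path_prob r (ca_step s b) bs'
  end.

Definition ca_dist (R : realFieldType) (r : R) (x0 y0 t : nat) (s : nat * nat) : R :=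
  \sum_(bs : t.-tuple bool | foldl ca_step (x0, y0) bs == s)
     ca_path_prob r (x0, y0) bs.

Definition p_r (R : realFieldType) (r : R) (x0 y0 x y : nat) : R :=
  ca_dist r x0 y0 (x + y - (x0 + y0))%N (x, y).

Definition poch (R : realFieldType) (a : R) (k : nat) : R :=
  \prod_(i < k) (a + i%:R).

From HB Require Import structures.
From mathcomp Require Import all_boot all_order all_algebra.
From mathcomp Require Import zify ring lra.
Import Order.TTheory GRing.Theory Num.Theory.
Local Open Scope ring_scope.
Set Implicit Arguments. Unset Strict Implicit.

(* The law p_t of the chain satisfies the forward equation
     p_{t+1}(x, y) = p_t(x-1, y) P((x-1, y) -> (x, y)) + p_t(x, y-1) P((x, y-1) -> (x, y)).
   For r = 1 the chain is Polya's urn and the claimed bound K(k, h) is its exact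
   (beta-binomial) law.  For r >= 1, K is a subsolution of the forward equation: on the
   edges k = 0 or h = 0 this is an equality or a one-line consequence of r >= 1, and in
   the interior, after dividing by K(k, h), it reduces to [subsolution_weights].
   Induction on time then gives K(k, h) <= p_{k+h}(x0 + k, y0 + h). *)

Lemma big_tuple_rcons (R : nmodType) (T : finType) t (F : seq T -> R) :
  \sum_(u : t.+1.-tuple T) F u = \sum_(s : t.-tuple T) \sum_(x : T) F (rcons s x).
Proof.
rewrite pair_big /=.
pose h := fun p : t.-tuple T * T => [tuple of rcons p.1 p.2].
pose g := fun u : t.+1.-tuple T =>
  (belast_tuple (thead u) (behead_tuple u), last (thead u) (behead u)).
rewrite (reindex h) //=; exists g.
- move=> [bs b] _; rewrite /g /h /=.
  have e : rcons bs b = thead [tuple of rcons bs b] :: behead [tuple of rcons bs b].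
    by rewrite -[LHS]/(tval [tuple of rcons bs b]) {1}(tuple_eta [tuple of rcons bs b]).
  move: e; rewrite lastI => /eqP; rewrite eqseq_rcons => /andP[/eqP e1 /eqP e2].
  by congr (_, _); [apply: val_inj => /=; exact: esym e1 | exact: esym e2].
- move=> u _; apply: val_inj; rewrite /g /h /= -lastI.
  exact: (congr1 val (esym (tuple_eta u))).
Qed.

Lemma foldl_ca_step_ge s bs :
  (s.1 <= (foldl ca_step s bs).1 /\ s.2 <= (foldl ca_step s bs).2)%N.
Proof.
elim: bs s => [|b bs IH] s //=.
by have [] := IH (ca_step s b); case: b => /=; lia.
Qed.

Lemma ca_trans_ge0 (R : realFieldType) (r : R) s b : 0 <= r -> 0 <= ca_trans r s b.
Proof.
move=> r_ge0; have den_ge0 : 0 <= r * s.1%:R + s.2%:R :> R by rewrite addr_ge0 ?mulr_ge0.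
by rewrite /ca_trans; case: b; rewrite divr_ge0 ?mulr_ge0.
Qed.

Section Process.

Variables (R : realFieldType) (r : R).

Lemma ca_path_prob_rcons s bs b :
  ca_path_prob r s (rcons bs b) = ca_path_prob r s bs * ca_trans r (foldl ca_step s bs) b.
Proof. by elim: bs s => [|c bs IH] s /=; rewrite ?mul1r ?mulr1 // IH mulrA. Qed.

Variables x0 y0 : nat.

Lemma ca_dist0 : ca_dist r x0 y0 0 (x0, y0) = 1.
Proof.
rewrite /ca_dist (eq_bigl (pred1 [tuple])) ?big_pred1_eq //.
by move=> bs; rewrite (tuple0 bs) /= eqxx.
Qed.

Lemma ca_dist_out t X Y : (X < x0 \/ Y < y0)%N -> ca_dist r x0 y0 t (X, Y) = 0.
Proof.
move=> out; rewrite /ca_dist big_pred0 // => bs; apply/negbTE/eqP => reach.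
by have := foldl_ca_step_ge (x0, y0) bs; rewrite reach /=; lia.
Qed.

Lemma ca_dist_forward t X Y : (0 < X)%N -> (0 < Y)%N ->
  ca_dist r x0 y0 t.+1 (X, Y) =
    ca_dist r x0 y0 t (X.-1, Y) * ca_trans r (X.-1, Y) true
  + ca_dist r x0 y0 t (X, Y.-1) * ca_trans r (X, Y.-1) false.
Proof.
move=> X_gt0 Y_gt0; set s0 := (x0, y0).
have last_step b v : (forall w, (ca_step w b == (X, Y)) = (w == v)) ->
    \sum_(bs : t.-tuple bool) (if foldl ca_step s0 (rcons bs b) == (X, Y)
                              then ca_path_prob r s0 (rcons bs b) else 0)
    = ca_dist r x0 y0 t v * ca_trans r v b.
  move=> step_eq; rewrite /ca_dist big_distrl /= [RHS]big_mkcond.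
  apply: eq_bigr => bs _; rewrite foldl_rcons ca_path_prob_rcons step_eq.
  by case: eqP => // ->.
rewrite /ca_dist big_mkcond (big_tuple_rcons _ (fun bs => if foldl ca_step s0 bs == (X, Y)
  then ca_path_prob r s0 bs else 0)) exchange_big big_bool /=.
congr (_ + _); apply: last_step => -[w1 w2]; rewrite /ca_step /= !xpair_eqE.
- by rewrite -(prednK X_gt0) eqSS.
- by rewrite -(prednK Y_gt0) eqSS.
Qed.

End Process.

Lemma subsolution_weights (R : realFieldType) (r D A B : R) :
  1 <= r -> 0 < D -> 0 <= A -> 0 <= B ->
  (A + B + 2) / (D + A + B + 1)
    <= r * (A + 1) / (D + r * A + B + 1) + (B + 1) / (D + r * (A + 1) + B).
Proof.
move=> r_ge1 D_gt0 A_ge0 B_ge0; set W := D + A + B + 1.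
set U := D + r * A + B + 1; set V := D + r * (A + 1) + B.
have W_gt0 : 0 < W by rewrite /W; lra.
have rA : A <= r * A by rewrite ler_peMl.
have U_ge_W : W <= U by rewrite /U /W; lra.
have V_ge_U : U <= V by rewrite /V /U mulrDr mulr1; lra.
have U_gt0 : 0 < U by lra.
have V_gt0 : 0 < V by lra.
(* At r = 1 we have U = V = W and the inequality is an equality. *)
rewrite -subr_ge0.
have -> : r * (A + 1) / U + (B + 1) / V - (A + B + 2) / W
    = (r - 1) * (A + 1) / W * ((D + B + 1) / U - (B + 1) / V).
  by rewrite /W /U /V; field; rewrite -/W -/U -/V !gt_eqF.
apply: mulr_ge0; first by rewrite divr_ge0 ?mulr_ge0; lra.
rewrite subr_ge0 (@le_trans _ _ ((B + 1) / U)) //.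
  by rewrite ler_pM2l ?ltr_pwDr // lef_pV2 ?posrE.
by rewrite ler_pM2r ?invr_gt0 //; lra.
Qed.

Lemma natr_binSS (R : realFieldType) a b :
  'C((a + b).+1, a.+1)%:R = 'C(a + b, a)%:R * (a + b).+1%:R / a.+1%:R :> R.
Proof.
have := mul_bin_diag (a + b).+1 a => /(congr1 (fun n => n%:R : R)).
by rewrite !natrM /= mulrC => ->; rewrite [_ * 'C(_, _)%:R]mulrC mulfK ?pnatr_eq0.
Qed.

Lemma natr_binS (R : realFieldType) a b :
  'C((a + b).+1, a)%:R = 'C(a + b, a)%:R * (a + b).+1%:R / b.+1%:R :> R.
Proof.
have := mul_bin_down (a + b).+1 a => /(congr1 (fun n => n%:R : R)).
rewrite subSn ?leq_addr // addKn !natrM /= mulrC => ->.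
by rewrite [_ * 'C(_, _)%:R]mulrC mulfK ?pnatr_eq0.
Qed.

Lemma poch0 (R : realFieldType) (c : R) : poch c 0 = 1.
Proof. by rewrite /poch big_ord0. Qed.

Lemma pochS (R : realFieldType) (c : R) k : poch c k.+1 = poch c k * (c + k%:R).
Proof. by rewrite /poch big_ord_recr. Qed.

Lemma poch_gt0 (R : realFieldType) (c : R) k : 0 < c -> 0 < poch c k.
Proof. by move=> c_gt0; apply: prodr_gt0 => i _; apply: ltr_wpDr. Qed.

Definition ca_bound (R : realFieldType) (r : R) (x0 y0 a b : nat) : R :=
  poch x0%:R a * poch y0%:R b / poch (r * x0%:R + y0%:R) (a + b) * 'C(a + b, a)%:R.

Section Bound.

Variables (R : realFieldType) (r : R) (x0 y0 : nat).
Hypotheses (r_ge1 : 1 <= r) (x0_gt0 : (0 < x0)%N) (y0_gt0 : (0 < y0)%N).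

Local Notation K := (ca_bound r x0 y0).
Local Notation D := (r * x0%:R + y0%:R).

Lemma r_ge0 : 0 <= r.
Proof. exact: le_trans ler01 r_ge1. Qed.

Lemma D_gt0 : 0 < D.
Proof. by rewrite ltr_wpDl ?ltr0n // mulr_ge0 ?ler0n ?r_ge0. Qed.

Lemma poch_D_neq0 n : poch D n != 0.
Proof. by rewrite gt_eqF ?poch_gt0 ?D_gt0. Qed.

Lemma ca_boundSl a b :
  K a.+1 b = K a b * ((x0 + a)%:R / (D + (a + b)%:R)) * ((a + b).+1%:R / a.+1%:R).
Proof.
rewrite /ca_bound addSn natr_binSS !pochS !natrD; field.
have := ler0n R a; have := ler0n R b; have := D_gt0 => *.
by rewrite poch_D_neq0 andbT; apply/andP; split; apply/lt0r_neq0; lra.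
Qed.

Lemma ca_boundSr a b :
  K a b.+1 = K a b * ((y0 + b)%:R / (D + (a + b)%:R)) * ((a + b).+1%:R / b.+1%:R).
Proof.
rewrite /ca_bound addnS natr_binS !pochS !natrD; field.
have := ler0n R a; have := ler0n R b; have := D_gt0 => *.
by rewrite poch_D_neq0 andbT; apply/andP; split; apply/lt0r_neq0; lra.
Qed.

Lemma ca_bound_ge0 a b : 0 <= K a b.
Proof.
by rewrite /ca_bound !mulr_ge0 ?invr_ge0 ?ler0n ?ltW ?poch_gt0 ?ltr0n ?D_gt0.
Qed.

Lemma ca_bound0S b : K 0 b.+1 = K 0 b * ca_trans r (x0, (y0 + b)%N) false.
Proof.
rewrite ca_boundSr /ca_trans /= add0n divff ?pnatr_eq0 // mulr1.
by rewrite natrD addrA.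
Qed.

Lemma ca_boundS0 a : K a.+1 0 <= K a 0 * ca_trans r ((x0 + a)%N, y0) true.
Proof.
rewrite ca_boundSl /ca_trans /= addn0 divff ?pnatr_eq0 // mulr1 -mulrA.
rewrite ler_wpM2l ?ca_bound_ge0 // -subr_ge0 !natrD.
set X := x0%:R; set Y := y0%:R; set A := a%:R.
have A_ge0 : 0 <= A by exact: ler0n.
have X_gt0 : 0 < X by rewrite ltr0n.
have Y_gt0 : 0 < Y by rewrite ltr0n.
have rXA_ge0 : 0 <= r * (X + A) by rewrite mulr_ge0 ?r_ge0 //; lra.
have D_pos := D_gt0.
have -> : r * ((X + A) / (r * (X + A) + Y)) - (X + A) / (r * X + Y + A)
    = (X + A) * (r - 1) * (r * X + Y) / ((r * (X + A) + Y) * (r * X + Y + A)).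
  by field; apply/andP; split; apply/lt0r_neq0; lra.
by rewrite divr_ge0 ?mulr_ge0 ?subr_ge0 //; lra.
Qed.

Lemma ca_boundSS a b :
  K a.+1 b.+1 <= K a b.+1 * ca_trans r ((x0 + a)%N, (y0 + b.+1)%N) true
               + K a.+1 b * ca_trans r ((x0 + a.+1)%N, (y0 + b)%N) false.
Proof.
rewrite (ca_boundSr a.+1 b) (ca_boundSr a b) (ca_boundSl a b) /ca_trans /=.
rewrite !addnS !addSn !natrD -!natr1 !natrD.
set c := K a b; set X := x0%:R; set Y := y0%:R; set A := a%:R; set B := b%:R.
have A_ge0 : 0 <= A by exact: ler0n.
have B_ge0 : 0 <= B by exact: ler0n.
have X_gt0 : 0 < X by rewrite ltr0n.
have Y_gt0 : 0 < Y by rewrite ltr0n.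
have D_pos : 0 < r * X + Y := D_gt0.
have rA_ge0 : 0 <= r * A by rewrite mulr_ge0 ?r_ge0.
have rA1_ge0 : 0 <= r * (A + 1) by rewrite mulr_ge0 ?r_ge0 //; lra.
have c_ge0 : 0 <= c := ca_bound_ge0 a b.
clearbody c X Y A B.
pose w := c * (X + A) * (Y + B) * (A + B + 1) / ((r * X + Y + (A + B)) * (A + 1) * (B + 1)).
have w_ge0 : 0 <= w.
  by rewrite /w; apply: divr_ge0; repeat apply: mulr_ge0; lra.
rewrite [leLHS](_ : _ = w * ((A + B + 2) / (r * X + Y + A + B + 1))); last first.
  by rewrite /w; field; rewrite !gt_eqF //; lra.
rewrite [leRHS](_ : _ = w * (r * (A + 1) / (r * X + Y + r * A + B + 1)
                             + (B + 1) / (r * X + Y + r * (A + 1) + B))); last first.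
  by rewrite /w; field; rewrite !gt_eqF //; lra.
by rewrite ler_wpM2l // subsolution_weights.
Qed.

End Bound.

Lemma ca_bound_le_dist (R : realFieldType) (r : R) (x0 y0 n a b : nat) :
  1 <= r -> (0 < x0)%N -> (0 < y0)%N -> (a + b)%N = n ->
  ca_bound r x0 y0 a b <= ca_dist r x0 y0 n ((x0 + a)%N, (y0 + b)%N).
Proof.
move=> r_ge1 x0_gt0 y0_gt0; have r0 := r_ge0 r_ge1.
elim: n a b => [|n IH] a b.
  case: a b => [|a] [|b] // _.
  by rewrite !addn0 ca_dist0 /ca_bound !poch0 bin0 divr1 !mul1r.
case: a b => [|a] [|b] // ab_eq; rewrite ca_dist_forward ?addn_gt0 ?x0_gt0 ?y0_gt0 //.
- rewrite ca_dist_out ?mul0r ?add0r; last by left; lia.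
  rewrite addn0 addnS succnK ca_bound0S // ler_wpM2r ?ca_trans_ge0 //.
  by have := IH 0%N b; rewrite !addn0; apply; lia.
- rewrite [ca_dist _ _ _ _ (_, (_.-1)%N)]ca_dist_out ?mul0r ?addr0; last by right; lia.
  rewrite addn0 addnS succnK.
  apply: le_trans (ca_boundS0 r_ge1 x0_gt0 y0_gt0 a) _.
  rewrite ler_wpM2r ?ca_trans_ge0 //.
  by have := IH a 0%N; rewrite !addn0; apply; lia.
- rewrite !addnS !succnK.
  apply: le_trans (ca_boundSS r_ge1 x0_gt0 y0_gt0 a b) _.
  by rewrite -!addnS lerD // ler_wpM2r ?ca_trans_ge0 // IH //; lia.
Qed.

Theorem lemma1 (R : realFieldType) (r : R) (x0 y0 k h : nat) :
  1 <= r -> (0 < x0)%N -> (0 < y0)%N ->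
  poch (x0%:R) k * poch (y0%:R) h / poch (r * x0%:R + y0%:R) (k + h)
    * ('C(k + h, k))%:R
  <= p_r r x0 y0 (x0 + k) (y0 + h).
Proof.
move=> r_ge1 x0_gt0 y0_gt0; rewrite /p_r.
by apply: ca_bound_le_dist => //; lia.
Qed.
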